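(* Let $s\ge1$ and $d\ge1$ be integers. There exists a $(0,1)$-matrix $M'$ with ${\rm br}_s(M')=d$ and $r(M')\cdot c(M')=\binom{d}{\le s}2^d$.
   Context: For a $(0,1)$-matrix $M$ of size $n\times m$, $M[i,j]$ denotes its $(i,j)$ entry and $[n]=\{1,\dots,n\}$. The $s$-binary rank ${\rm br}_s(M)$ is the minimal integer $d\ge 0$ such that there exist $d$ sets (rectangles) $I_k\times J_k$ with $I_k\subseteq[n]$, $J_k\subseteq[m]$, $k\in[d]$, with $M[i,j]=1$ for all $(i,j)\in I_k\times J_k$ and all $k$, and such that every $(i,j)$ with $M[i,j]=1$ lies in at least one and at most $s$ of the rectangles. $r(M)$ and $c(M)$ denote the numbers of distinct rows and distinct columns of $M$. $\binom{d}{\le s}=\sum_{i=0}^{s}\binom{d}{i}$. *)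

From mathcomp Require Import all_boot all_algebra.
Set Implicit Arguments. Unset Strict Implicit. Unset Printing Implicit Defensive.

Definition is_s_cover (n m : nat) (M : 'M[bool]_(n, m)) (s d : nat)
  (I : 'I_d -> {set 'I_n}) (J : 'I_d -> {set 'I_m}) : Prop :=
  (forall (k : 'I_d) (i : 'I_n) (j : 'I_m), i \in I k -> j \in J k -> M i j) /\
  (forall (i : 'I_n) (j : 'I_m), M i j ->
     let cnt := #|[set k : 'I_d | (i \in I k) && (j \in J k)]| in
     1 <= cnt <= s).

Definition has_s_cover (n m : nat) (M : 'M[bool]_(n, m)) (s d : nat) : Prop :=
  exists (I : 'I_d -> {set 'I_n}) (J : 'I_d -> {set 'I_m}), is_s_cover M s I J.

Definition is_s_binary_rank (n m : nat) (M : 'M[bool]_(n, m)) (s d : nat) : Prop :=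
  has_s_cover M s d /\ (forall d', has_s_cover M s d' -> d <= d').

Definition num_rows (n m : nat) (M : 'M[bool]_(n, m)) : nat :=
  #|[set row i M | i : 'I_n]|.
Definition num_cols (n m : nat) (M : 'M[bool]_(n, m)) : nat :=
  #|[set col j M | j : 'I_m]|.

Definition binom_le (d s : nat) : nat := \sum_(i < s.+1) 'C(d, i).

(* The witness is the intersection matrix whose rows are the subsets of
   [d] = {0, ..., d-1} of size at most s, whose columns are all subsets of
   [d], and whose (A, B) entry is 1 iff A and B meet.  The rectangles
   {A | k \in A} x {B | k \in B}, k \in [d], cover the entry (A, B) exactly
   #|A :&: B| <= #|A| <= s times, so br_s <= d.  The singletons form a
   fooling set of size d: a rectangle containing ({k}, {k}) and ({k'}, {k'})
   also contains ({k}, {k'}), which is a 0-entry unless k = k'.  Singleton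
   columns separate the rows and singleton rows separate the columns, so all
   binom_le d s rows and all 2^d columns are distinct. *)
From mathcomp Require Import all_boot all_algebra.

Set Implicit Arguments.
Unset Strict Implicit.
Unset Printing Implicit Defensive.

Lemma sum_eqn_ord (x s : nat) : \sum_(k < s.+1) (x == k) = (x <= s).
Proof.
elim: s => [|s IHs]; first by rewrite big_ord1 leqn0.
rewrite big_ord_recr /= IHs [x <= s.+1]leq_eqVlt ltnS.
by case: eqP => [->|_]; rewrite ?ltnn ?addn0.
Qed.

Lemma card_sets_le (T : finType) (s : nat) :
  #|[set A : {set T} | #|A| <= s]| = binom_le #|T| s.
Proof.
rewrite /binom_le.
under eq_bigr => k _ do rewrite -card_draws -sum1_card big_mkcond /=.
rewrite exchange_big -sum1_card big_mkcond /=; apply: eq_bigr => A _.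
rewrite inE -[LHS]/(nat_of_bool _) -sum_eqn_ord.
by apply: eq_bigr => k _; rewrite inE.
Qed.

Lemma card_sets (T : finType) : #|{: {set T}}| = 2 ^ #|T|.
Proof. by rewrite -[#|T|]cardsT -card_powerset powersetT cardsT. Qed.

Lemma fooling_set_le_cover (n m : nat) (M : 'M[bool]_(n, m)) (s e d : nat)
    (f : 'I_e -> 'I_n) (g : 'I_e -> 'I_m) :
  (forall k, M (f k) (g k)) -> (forall k k', M (f k) (g k') -> k = k') ->
  has_s_cover M s d -> e <= d.
Proof.
move=> M_diag M_offdiag [I [J [IJ_ones IJ_cover]]].
have in_rect k : exists r : 'I_d, (f k \in I r) && (g k \in J r).
  have /andP[+ _] := IJ_cover _ _ (M_diag k).
  by rewrite card_gt0 => /set0Pn[r]; rewrite inE; exists r.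
have [h hP] := fin_all_exists in_rect.
suff h_inj : injective h by have := leq_card h h_inj; rewrite !card_ord.
move=> k k' hkk'; apply: M_offdiag; apply: (IJ_ones (h k)).
  by case/andP: (hP k).
by rewrite hkk'; case/andP: (hP k').
Qed.

Lemma num_rows_distinct (n m : nat) (M : 'M[bool]_(n, m)) :
  (forall i i', (forall j, M i j = M i' j) -> i = i') -> num_rows M = n.
Proof.
move=> M_inj; rewrite /num_rows card_imset ?card_ord // => i i' /rowP eq_row.
by apply: M_inj => j; have := eq_row j; rewrite !mxE.
Qed.

Lemma num_cols_distinct (n m : nat) (M : 'M[bool]_(n, m)) :
  (forall j j', (forall i, M i j = M i j') -> j = j') -> num_cols M = m.
Proof.
move=> M_inj; rewrite /num_cols card_imset ?card_ord // => j j' /colP eq_col.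
by apply: M_inj => i; have := eq_col i; rewrite !mxE.
Qed.

Section MeetMatrix.

Variables s d : nat.

Definition small_sets : {set {set 'I_d}} := [set A : {set 'I_d} | #|A| <= s].

Local Notation n := #|small_sets|.
Local Notation m := #|{: {set 'I_d}}|.

Definition row_set (i : 'I_n) : {set 'I_d} := enum_val i.
Definition col_set (j : 'I_m) : {set 'I_d} := enum_val j.

Definition meet_mx : 'M[bool]_(n, m) :=
  \matrix_(i, j) ~~ [disjoint row_set i & col_set j].

Lemma meet_mxE i j : meet_mx i j = ~~ [disjoint row_set i & col_set j].
Proof. by rewrite mxE. Qed.

Lemma meet_mx_cover :
  is_s_cover meet_mx s (fun k => [set i | k \in row_set i])
                       (fun k => [set j | k \in col_set j]).
Proof.
split=> [k i j | i j].
  by rewrite !inE meet_mxE => ki kj; apply/negP => /disjointFr/(_ ki); rewrite kj.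
rewrite meet_mxE => meet_ij.
have -> : [set k | (i \in [set i | k \in row_set i]) &&
                   (j \in [set j | k \in col_set j])] = row_set i :&: col_set j.
  by apply/setP => k; rewrite !inE.
rewrite /= card_gt0 setI_eq0 meet_ij /=.
apply: leq_trans (subset_leq_card (subsetIl _ _)) _.
by have := enum_valP i; rewrite inE.
Qed.

Definition col_of (k : 'I_d) : 'I_m := enum_rank [set k].

Lemma col_ofK k : col_set (col_of k) = [set k].
Proof. exact: enum_rankK. Qed.

Lemma meet_mx_col_of i k : meet_mx i (col_of k) = (k \in row_set i).
Proof. by rewrite meet_mxE col_ofK disjoint_sym disjoints1 negbK. Qed.

Hypothesis s_gt0 : 0 < s.

Lemma small_sets1 k : [set k] \in small_sets.
Proof. by rewrite inE cards1. Qed.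

Definition row_of (k : 'I_d) : 'I_n := enum_rank_in (small_sets1 k) [set k].

Lemma row_ofK k : row_set (row_of k) = [set k].
Proof. exact: enum_rankK_in (small_sets1 k). Qed.

Lemma meet_mx_row_of k j : meet_mx (row_of k) j = (k \in col_set j).
Proof. by rewrite meet_mxE row_ofK disjoints1 negbK. Qed.

Lemma meet_mx_s_binary_rank : is_s_binary_rank meet_mx s d.
Proof.
split; first by exists (fun k => [set i | k \in row_set i]),
                       (fun k => [set j | k \in col_set j]); apply: meet_mx_cover.
move=> d'; apply: (@fooling_set_le_cover _ _ _ _ _ _ row_of col_of) => [k|k k'].
  by rewrite meet_mx_row_of col_ofK set11.
by rewrite meet_mx_row_of col_ofK inE => /eqP.
Qed.

Lemma num_rows_meet_mx : num_rows meet_mx = binom_le d s.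
Proof.
rewrite num_rows_distinct; first by rewrite card_sets_le card_ord.
move=> i i' same_row; apply: enum_val_inj; apply/setP => k.
by rewrite -!meet_mx_col_of same_row.
Qed.

Lemma num_cols_meet_mx : num_cols meet_mx = 2 ^ d.
Proof.
rewrite num_cols_distinct; first by rewrite card_sets card_ord.
move=> j j' same_col; apply: enum_val_inj; apply/setP => k.
by rewrite -!meet_mx_row_of same_col.
Qed.

End MeetMatrix.

Theorem lemma5 (s d : nat) (hs : 1 <= s) (hd : 1 <= d) :
  exists (n m : nat) (M : 'M[bool]_(n, m)),
    is_s_binary_rank M s d /\
    num_rows M * num_cols M = binom_le d s * 2 ^ d.
Proof.
(* The construction works for d = 0 as well. *)
exists _, _, (meet_mx s d); split; first exact: meet_mx_s_binary_rank.
by rewrite num_rows_meet_mx // num_cols_meet_mx.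
Qed.
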